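(* Let $\delta>0$ and let $x:[0,1]\to\mathbb{D}_{1+\delta}\setminus\dot{\mathbb{D}}$ be a $C^1$ closed curve ($x(0)=x(1)$). Then for any capping disc $u:D\to\mathbb{R}^2$ of $x$, \[ \Big|\int_D u^*\omega-\pi\deg(x)\Big|\le L(x)\,\delta, \] where $\deg(x)\in\mathbb{Z}$ is the winding number of $x$ around the origin and $L(x)$ is the Euclidean length of $x$.
   Context: $\omega=dx\wedge dy$ on $\mathbb{R}^2$; $\mathbb{D}$ is the closed unit disc, $\dot{\mathbb{D}}$ its interior, and $\mathbb{D}_{1+\delta}$ the closed disc of radius $1+\delta$ centered at $0$. A capping disc of $x$ is a map $u$ from the closed unit disc $D$ with $u|_{\partial D}$ parametrizing $x$. *)

From Stdlib Require Import Reals.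
From Coquelicot Require Import Coquelicot.
Open Scope R_scope.

(* A plane curve is given by its two coordinate functions c1 c2 : R -> R,
   of which only the restriction to [0,1] matters. *)

Definition C1_curve (c1 c2 : R -> R) : Prop :=
  forall t, 0 <= t <= 1 ->
    ex_derive c1 t /\ ex_derive c2 t /\
    continuous (Derive c1) t /\ continuous (Derive c2) t.

Definition closed_curve (c1 c2 : R -> R) : Prop :=
  c1 0 = c1 1 /\ c2 0 = c2 1.

Definition curve_length (c1 c2 : R -> R) : R :=
  RInt (fun t => sqrt (Derive c1 t ^ 2 + Derive c2 t ^ 2)) 0 1.

Definition winding_number (c1 c2 : R -> R) (n : Z) : Prop :=
  exists theta : R -> R,
    (forall t, 0 <= t <= 1 ->
       filterlim theta (within (fun s => 0 <= s <= 1) (locally t))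
                 (locally (theta t))) /\
    (forall t, 0 <= t <= 1 ->
       c1 t = sqrt (c1 t ^ 2 + c2 t ^ 2) * cos (theta t) /\
       c2 t = sqrt (c1 t ^ 2 + c2 t ^ 2) * sin (theta t)) /\
    theta 1 - theta 0 = 2 * PI * IZR n.

Definition pd1 (f : R -> R -> R) (a b : R) : R := Derive (fun s => f s b) a.
Definition pd2 (f : R -> R -> R) (a b : R) : R := Derive (fun s => f a s) b.

Definition C1_on2 (P : R -> R -> Prop) (f : R -> R -> R) : Prop :=
  forall a b, P a b ->
    ex_derive (fun s => f s b) a /\ ex_derive (fun s => f a s) b /\
    continuous (fun p : R * R => pd1 f (fst p) (snd p)) (a, b) /\
    continuous (fun p : R * R => pd2 f (fst p) (snd p)) (a, b).

(* Jacobian determinant of u = (u1,u2): (u^* omega) = jac dx /\ dy. *)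
Definition jac (u1 u2 : R -> R -> R) (a b : R) : R :=
  pd1 u1 a b * pd2 u2 a b - pd2 u1 a b * pd1 u2 a b.

(* \int_D u^* omega over the closed unit disc D, as an iterated integral. *)
Definition disc_integral (g : R -> R -> R) : R :=
  RInt (fun a => RInt (fun b => g a b) (- sqrt (1 - a ^ 2)) (sqrt (1 - a ^ 2)))
       (-1) 1.

Definition pullback_area (u1 u2 : R -> R -> R) : R := disc_integral (jac u1 u2).

Definition capping_disc (c1 c2 : R -> R) (u1 u2 : R -> R -> R) : Prop :=
  (exists eps, 0 < eps /\
     C1_on2 (fun a b => a ^ 2 + b ^ 2 < (1 + eps) ^ 2) u1 /\
     C1_on2 (fun a b => a ^ 2 + b ^ 2 < (1 + eps) ^ 2) u2) /\
  (forall t, 0 <= t <= 1 ->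
     u1 (cos (2 * PI * t)) (sin (2 * PI * t)) = c1 t /\
     u2 (cos (2 * PI * t)) (sin (2 * PI * t)) = c2 t).

From Stdlib Require Import Reals Lra Lia.
From Coquelicot Require Import Coquelicot.
Open Scope R_scope.

(* Green's theorem turns the area into the action: the integral of u^* omega over D equals
   the integral of x1 dx2 over the boundary, which for a closed curve is
   (1/2) int (x1 x2' - x2 x1').  The winding number is (1/2 pi) int (x1 x2' - x2 x1') / |x|^2,
   so the defect is (1/2) int (x1 x2' - x2 x1') (1 - 1/|x|^2).  Pointwise
   |x1 x2' - x2 x1'| <= |x| |x'|, and for r = |x| in [1, 1 + delta] one has
   r (1 - 1/r^2) / 2 = (r^2 - 1) / (2 r) <= r - 1 <= delta, whence the bound delta L(x).

   Green's theorem for the disc is obtained by differentiating in a the integral of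
   f d_b g along the chord {a} x [-sqrt (1 - a^2), sqrt (1 - a^2)]: the derivative is the
   integral of the Jacobian along the chord plus boundary terms, which the substitution
   a = cos (2 pi t) turns into x1 dx2 along the two arcs of the circle.  Integrating over
   [-cos (2 pi h), cos (2 pi h)] and letting h -> 0 gives the formula.  The winding number
   formula holds because the lift theta of the angle and the integral of the angular speed
   differ by a continuous function with values in pi Z that vanishes at 0. *)

Lemma continuous_eps (f : R -> R) x : continuous f x ->
  forall eps, 0 < eps -> exists d, 0 < d /\
    forall y, Rabs (y - x) < d -> Rabs (f y - f x) < eps.
Proof.
  intros Hc eps He.
  destruct (proj1 (filterlim_locally (F := locally x) f (f x)) Hc (mkposreal _ He)) as [d Hd].
  exists d; split; [apply cond_pos | intros y Hy; exact (Hd y Hy)].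
Qed.

Lemma continuous_of_eps (f : R -> R) x :
  (forall eps, 0 < eps -> exists d, 0 < d /\
     forall y, Rabs (y - x) < d -> Rabs (f y - f x) < eps) ->
  continuous f x.
Proof.
  intros H. apply (proj2 (filterlim_locally (F := locally x) f (f x))).
  intros eps. destruct (H eps (cond_pos eps)) as [d [Hd Hd']].
  exists (mkposreal _ Hd). intros y Hy. exact (Hd' y Hy).
Qed.

Lemma continuity_2d_pt_eps (f : R -> R -> R) x y : continuity_2d_pt f x y ->
  forall eps, 0 < eps -> exists d, 0 < d /\ forall u v,
    Rabs (u - x) < d -> Rabs (v - y) < d -> Rabs (f u v - f x y) < eps.
Proof.
  intros Hc eps He. destruct (Hc (mkposreal _ He)) as [d Hd].
  exists d; split; [apply cond_pos | exact Hd].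
Qed.

Lemma continuity_2d_pt_continuous_2 (A : R -> R -> R) x y :
  continuity_2d_pt A x y -> continuous (fun v => A x v) y.
Proof.
  intros H. apply continuous_of_eps. intros eps He.
  destruct (continuity_2d_pt_eps A x y H eps He) as [d [Hd Hd']].
  exists d. split; [exact Hd|]. intros v Hv. apply Hd'; [|exact Hv].
  rewrite Rminus_eq_0, Rabs_R0; exact Hd.
Qed.

Lemma continuity_2d_pt_lift (A : R -> R) u t :
  continuous A t -> continuity_2d_pt (fun _ v => A v) u t.
Proof.
  intros H eps. destruct (continuous_eps A t H eps (cond_pos eps)) as [d [Hd Hd']].
  exists (mkposreal _ Hd). intros u' v _ Hv. exact (Hd' v Hv).
Qed.

Lemma continuous_graph (F : R -> R -> R) (k : R -> R) x :
  continuity_2d_pt F x (k x) -> continuous k x -> continuous (fun s => F s (k s)) x.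
Proof.
  intros HF Hk. apply (continuous_comp_2 (fun s => s) k F x).
  - apply continuous_id.
  - exact Hk.
  - exact (proj1 (continuity_2d_pt_filterlim F x (k x)) HF).
Qed.

Lemma continuous_diag (F : R -> R -> R) a :
  continuity_2d_pt F a a -> continuous (fun s => F s s) a.
Proof. intros H. exact (continuous_graph F (fun s => s) a H (continuous_id a)). Qed.

Lemma continuous_mult_R (A B : R -> R) x : continuous A x -> continuous B x ->
  continuous (fun y => A y * B y) x.
Proof. intros HA HB. exact (continuous_mult (K := R_AbsRing) A B x HA HB). Qed.

Lemma continuous_pow2_R (A : R -> R) x : continuous A x -> continuous (fun s => A s ^ 2) x.
Proof.
  intros H. apply (continuous_ext (fun s => A s * A s)); [intros; simpl; ring|].
  apply continuous_mult_R; exact H.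
Qed.

Lemma continuous_opp_R (A : R -> R) x : continuous A x -> continuous (fun y => - A y) x.
Proof. intros H. exact (continuous_opp (V := R_NormedModule) A x H). Qed.

Lemma continuous_bounded_segment (g : R -> R) m M : m <= M ->
  (forall b, m <= b <= M -> continuous g b) ->
  exists B, 0 <= B /\ forall b, m <= b <= M -> Rabs (g b) <= B.
Proof.
  intros HmM Hc.
  assert (Hc' : forall b, m <= b <= M -> continuity_pt g b)
    by (intros b Hb; apply continuity_pt_filterlim, Hc, Hb).
  destruct (continuity_ab_maj g m M HmM Hc') as [x1 [Hx1 _]].
  destruct (continuity_ab_min g m M HmM Hc') as [x2 [Hx2 _]].
  exists (Rabs (g x1) + Rabs (g x2)). split.
  - pose proof (Rabs_pos (g x1)); pose proof (Rabs_pos (g x2)); lra.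
  - intros b Hb. specialize (Hx1 b Hb). specialize (Hx2 b Hb).
    pose proof (Rle_abs (g x1)). pose proof (Rabs_pos (g x1)).
    pose proof (Rle_abs (- g x2)). rewrite Rabs_Ropp in *. pose proof (Rabs_pos (g x2)).
    apply Rabs_le. lra.
Qed.

Lemma is_derive_mult_R (f g : R -> R) x df dg : is_derive f x df -> is_derive g x dg ->
  is_derive (fun y => f y * g y) x (df * g x + f x * dg).
Proof. intros Hf Hg. apply (is_derive_mult f g x df dg Hf Hg). intros; apply Rmult_comm. Qed.

Lemma is_derive_comp_R (f g : R -> R) x df dg : is_derive f (g x) df -> is_derive g x dg ->
  is_derive (fun y => f (g y)) x (df * dg).
Proof. intros H1 H2. rewrite Rmult_comm. exact (is_derive_comp f g x df dg H1 H2). Qed.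

Lemma is_derive_minus_R (A B : R -> R) x dA dB : is_derive A x dA -> is_derive B x dB ->
  is_derive (fun y => A y - B y) x (dA - dB).
Proof. intros HA HB. exact (is_derive_minus A B x dA dB HA HB). Qed.

Lemma is_derive_opp_R (A : R -> R) x dA : is_derive A x dA ->
  is_derive (fun y => - A y) x (- dA).
Proof. intros HA. exact (is_derive_opp A x dA HA). Qed.

Lemma is_derive_const_R (c x : R) : is_derive (fun _ => c) x 0.
Proof. exact (is_derive_const (K := R_AbsRing) (V := R_NormedModule) c x). Qed.

Lemma is_derive_id_R x : is_derive (fun y : R => y) x 1.
Proof. exact (is_derive_id (K := R_AbsRing) x). Qed.

Lemma is_derive_comp_2d (G : R -> R -> R) (phi psi : R -> R) t dphi dpsi lx ly :
  differentiable_pt_lim G (phi t) (psi t) lx ly ->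
  is_derive phi t dphi -> is_derive psi t dpsi ->
  is_derive (fun s => G (phi s) (psi s)) t (lx * dphi + ly * dpsi).
Proof.
  intros HG H1 H2. apply is_derive_Reals.
  apply derivable_pt_lim_comp_2d; auto; apply is_derive_Reals; auto.
Qed.

Lemma RInt_minus_R (f g : R -> R) a b : ex_RInt f a b -> ex_RInt g a b ->
  RInt (fun x => f x - g x) a b = RInt f a b - RInt g a b.
Proof. intros Hf Hg. exact (RInt_minus f g a b Hf Hg). Qed.

Lemma RInt_plus_R (f g : R -> R) a b : ex_RInt f a b -> ex_RInt g a b ->
  RInt (fun x => f x + g x) a b = RInt f a b + RInt g a b.
Proof. intros Hf Hg. exact (RInt_plus f g a b Hf Hg). Qed.

Lemma RInt_scal_R (F : R -> R) a b c : ex_RInt F a b ->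
  RInt (fun x => c * F x) a b = c * RInt F a b.
Proof. intros H. exact (RInt_scal (V := R_CompleteNormedModule) F a b c H). Qed.

Lemma ex_RInt_continuous_segment (f : R -> R) m M :
  (forall b, m <= b <= M -> continuous f b) ->
  forall x y, m <= x <= M -> m <= y <= M -> ex_RInt f x y.
Proof.
  intros Hc x y Hx Hy. apply (ex_RInt_continuous (V := R_CompleteNormedModule)).
  intros z Hz. apply Hc. split.
  - apply Rle_trans with (2 := proj1 Hz). apply Rmin_glb; lra.
  - apply Rle_trans with (1 := proj2 Hz). apply Rmax_lub; lra.
Qed.

Lemma ex_RInt_continuous_R (f : R -> R) a b : (forall s, continuous f s) -> ex_RInt f a b.
Proof. intros H. apply (ex_RInt_continuous (V := R_CompleteNormedModule)). auto. Qed.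

Lemma ex_RInt_continuous_01 (f : R -> R) :
  (forall t, 0 <= t <= 1 -> continuous f t) -> ex_RInt f 0 1.
Proof. intros H. apply (ex_RInt_continuous_segment f 0 1 H); lra. Qed.

Lemma RInt_Chasles_0 (F : R -> R) a b : (forall s, continuous F s) ->
  RInt F a b = RInt F 0 b - RInt F 0 a.
Proof.
  intros H.
  pose proof (RInt_Chasles (V := R_CompleteNormedModule) F 0 a b
    (ex_RInt_continuous_R F 0 a H) (ex_RInt_continuous_R F a b H)) as E.
  change (RInt F 0 a + RInt F a b = RInt F 0 b) in E. lra.
Qed.

Lemma continuous_RInt_upper (f : R -> R) m M x :
  (forall b, m <= b <= M -> continuous f b) -> m < x < M ->
  continuous (fun y => RInt f m y) x.
Proof.
  intros Hc Hx. apply (continuous_RInt_1 f m x).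
  assert (Hd : 0 < Rmin (x - m) (M - x)) by (apply Rmin_glb_lt; lra).
  exists (mkposreal _ Hd). intros y Hy.
  change (Rabs (y - x) < Rmin (x - m) (M - x)) in Hy.
  pose proof (Rmin_l (x - m) (M - x)). pose proof (Rmin_r (x - m) (M - x)).
  apply Rabs_lt_between in Hy.
  apply (RInt_correct (V := R_CompleteNormedModule)).
  apply (ex_RInt_continuous_segment f m M Hc); lra.
Qed.

Lemma continuous_primitive (F : R -> R) y : (forall s, continuous F s) ->
  continuous (fun z => RInt F 0 z) y.
Proof.
  intros H. apply (continuous_RInt_1 F 0 y). apply filter_forall. intros z.
  apply (RInt_correct (V := R_CompleteNormedModule)). apply ex_RInt_continuous_R, H.
Qed.

Lemma integration_by_parts (F G dF dG : R -> R) l r :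
  (forall t, Rmin l r <= t <= Rmax l r -> is_derive F t (dF t) /\ is_derive G t (dG t) /\
      continuous dF t /\ continuous dG t) ->
  RInt (fun t => F t * dG t) l r = F r * G r - F l * G l - RInt (fun t => dF t * G t) l r.
Proof.
  intros H.
  assert (HI := is_RInt_scal_derive (V := R_CompleteNormedModule) F G dF dG l r
    ltac:(intros; apply H; auto) ltac:(intros; apply H; auto)
    ltac:(intros; apply H; auto) ltac:(intros; apply H; auto)).
  assert (C : forall t, Rmin l r <= t <= Rmax l r -> continuous F t /\ continuous G t).
  { intros t Ht. destruct (H t Ht) as (H1 & H2 & _). split;
    apply (ex_derive_continuous (K := R_AbsRing) (V := R_NormedModule)); eexists; eauto. }
  assert (E1 : ex_RInt (fun t => F t * dG t) l r).
  { apply (ex_RInt_continuous (V := R_CompleteNormedModule)). intros t Ht.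
    apply continuous_mult_R; apply C || apply H; auto. }
  assert (E2 : ex_RInt (fun t => dF t * G t) l r).
  { apply (ex_RInt_continuous (V := R_CompleteNormedModule)). intros t Ht.
    apply continuous_mult_R; [apply H | apply C]; auto. }
  apply is_RInt_unique in HI.
  change (RInt (fun t => dF t * G t + F t * dG t) l r = F r * G r - F l * G l) in HI.
  rewrite RInt_plus_R in HI by auto. lra.
Qed.

Lemma RInt_opp_point (F : R -> R) z : z = 0 -> RInt F (- z) z = 0.
Proof. intros ->. rewrite Ropp_0. apply (RInt_point (V := R_CompleteNormedModule)). Qed.

(** * Integrals depending on parameters *)

Definition unif_cont_param (H : R -> R -> R -> R) p0 q0 m M : Prop :=
  forall eps, 0 < eps -> locally_2d (fun p q =>
    forall b, m <= b <= M -> Rabs (H p q b - H p0 q0 b) < eps) p0 q0.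

Lemma unif_cont_param_1 (A : R -> R -> R) p0 q0 m M : m <= M ->
  (forall b, m <= b <= M -> continuity_2d_pt A p0 b) ->
  unif_cont_param (fun p q b => A p b) p0 q0 m M.
Proof.
  intros HmM Hc eps He.
  destruct (uniform_continuity_2d_1d' A m M p0 Hc (mkposreal _ He)) as [d Hd].
  pose proof (cond_pos d). exists d. intros p q Hp _ b Hb. apply Rabs_lt_between in Hp.
  apply (Hd b p0 b p Hb ltac:(lra) Hb ltac:(lra)).
  rewrite Rminus_eq_0, Rabs_R0. assumption.
Qed.

Lemma unif_cont_param_2 (A : R -> R -> R) p0 q0 m M : m <= M ->
  (forall b, m <= b <= M -> continuity_2d_pt A q0 b) ->
  unif_cont_param (fun p q b => A q b) p0 q0 m M.
Proof.
  intros HmM Hc eps He.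
  destruct (uniform_continuity_2d_1d' A m M q0 Hc (mkposreal _ He)) as [d Hd].
  pose proof (cond_pos d). exists d. intros p q _ Hq b Hb. apply Rabs_lt_between in Hq.
  apply (Hd b q0 b q Hb ltac:(lra) Hb ltac:(lra)).
  rewrite Rminus_eq_0, Rabs_R0. assumption.
Qed.

Lemma unif_cont_param_mult H1 H2 p0 q0 m M : m <= M ->
  unif_cont_param H1 p0 q0 m M -> unif_cont_param H2 p0 q0 m M ->
  (forall b, m <= b <= M -> continuous (H1 p0 q0) b) ->
  (forall b, m <= b <= M -> continuous (H2 p0 q0) b) ->
  unif_cont_param (fun p q b => H1 p q b * H2 p q b) p0 q0 m M.
Proof.
  intros HmM U1 U2 C1 C2 eps He.
  destruct (continuous_bounded_segment _ m M HmM C1) as [B1 [HB1 B1b]].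
  destruct (continuous_bounded_segment _ m M HmM C2) as [B2 [HB2 B2b]].
  set (e1 := eps / (2 * (B2 + 1))). set (e2 := Rmin 1 (eps / (2 * (B1 + 1)))).
  assert (He1 : 0 < e1) by (apply Rdiv_lt_0_compat; lra).
  assert (He2 : 0 < e2) by (apply Rmin_glb_lt; [lra | apply Rdiv_lt_0_compat; lra]).
  assert (Le1 : e1 * (B2 + 1) = eps / 2) by (unfold e1; field; lra).
  assert (Le2 : e2 * (B1 + 1) <= eps / 2).
  { apply Rle_trans with ((eps / (2 * (B1 + 1))) * (B1 + 1)).
    - apply Rmult_le_compat_r; [lra | apply Rmin_r].
    - right. field. lra. }
  assert (e2 <= 1) by apply Rmin_l.
  apply locally_2d_impl with (2 := locally_2d_and _ _ _ _ (U1 e1 He1) (U2 e2 He2)).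
  apply locally_2d_forall. intros p q [D1 D2] b Hb.
  specialize (D1 b Hb). specialize (D2 b Hb). specialize (B1b b Hb). specialize (B2b b Hb).
  set (x1 := H1 p q b) in *. set (x2 := H2 p q b) in *.
  set (y1 := H1 p0 q0 b) in *. set (y2 := H2 p0 q0 b) in *.
  replace (x1 * x2 - y1 * y2) with ((x1 - y1) * x2 + y1 * (x2 - y2)) by ring.
  eapply Rle_lt_trans; [apply Rabs_triang|]. rewrite !Rabs_mult.
  assert (Rabs x2 <= B2 + 1).
  { replace x2 with (y2 + (x2 - y2)) by ring.
    eapply Rle_trans; [apply Rabs_triang | lra]. }
  assert (Rabs (x1 - y1) * Rabs x2 <= e1 * (B2 + 1))
    by (apply Rmult_le_compat; try apply Rabs_pos; lra).
  assert (Rabs y1 * Rabs (x2 - y2) < (B1 + 1) * e2)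
    by (pose proof (Rabs_pos y1); pose proof (Rabs_pos (x2 - y2)); nra).
  lra.
Qed.

Lemma abs_RInt_diff_le_const (F G : R -> R) m M a b eps :
  m <= a <= M -> m <= b <= M ->
  (forall x, m <= x <= M -> continuous F x) -> (forall x, m <= x <= M -> continuous G x) ->
  (forall x, m <= x <= M -> Rabs (F x - G x) <= eps) ->
  Rabs (RInt F a b - RInt G a b) <= (M - m) * eps.
Proof.
  intros Ha Hb CF CG HFG.
  pose proof (Rle_trans _ _ _ (Rabs_pos _) (HFG a Ha)) as Heps.
  assert (EF := ex_RInt_continuous_segment F m M CF a b Ha Hb).
  assert (EG := ex_RInt_continuous_segment G m M CG a b Ha Hb).
  rewrite <- RInt_minus_R by assumption.
  eapply Rle_trans.
  - apply (norm_RInt_le_const_abs (fun x => F x - G x) a b).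
    + intros x Hx. apply HFG.
      pose proof (Rmin_glb a b m (proj1 Ha) (proj1 Hb)).
      pose proof (Rmax_lub a b M (proj2 Ha) (proj2 Hb)). lra.
    + apply (RInt_correct (V := R_CompleteNormedModule)).
      exact (ex_RInt_minus (V := R_CompleteNormedModule) F G a b EF EG).
  - apply Rmult_le_compat_r; [exact Heps|]. apply Rabs_le. lra.
Qed.

Lemma locally_2d_between (k : R -> R -> R) p0 q0 m M :
  continuity_2d_pt k p0 q0 -> m < k p0 q0 < M -> locally_2d (fun p q => m < k p q < M) p0 q0.
Proof.
  intros Hk Hk0.
  assert (Hd : 0 < Rmin (k p0 q0 - m) (M - k p0 q0)) by (apply Rmin_glb_lt; lra).
  apply locally_2d_impl with (2 := Hk (mkposreal _ Hd)). apply locally_2d_forall.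
  intros p q Hpq. simpl in Hpq. apply Rabs_lt_between in Hpq.
  pose proof (Rmin_l (k p0 q0 - m) (M - k p0 q0)).
  pose proof (Rmin_r (k p0 q0 - m) (M - k p0 q0)). lra.
Qed.

Lemma continuity_2d_pt_RInt_bounds (F : R -> R) (l r : R -> R -> R) p0 q0 m M :
  (forall x, m <= x <= M -> continuous F x) ->
  continuity_2d_pt l p0 q0 -> continuity_2d_pt r p0 q0 ->
  m < l p0 q0 < M -> m < r p0 q0 < M ->
  continuity_2d_pt (fun p q => RInt F (l p q) (r p q)) p0 q0.
Proof.
  intros CF Hl Hr Hl0 Hr0.
  set (P := fun y => RInt F m y).
  apply continuity_2d_pt_ext_loc with (fun p q => P (r p q) - P (l p q)).
  - apply locally_2d_impl with (2 := locally_2d_and _ _ _ _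
      (locally_2d_between l p0 q0 m M Hl Hl0) (locally_2d_between r p0 q0 m M Hr Hr0)).
    apply locally_2d_forall. intros p q [Hlpq Hrpq].
    pose proof (RInt_Chasles (V := R_CompleteNormedModule) F m (l p q) (r p q)
      (ex_RInt_continuous_segment F m M CF m (l p q) ltac:(lra) ltac:(lra))
      (ex_RInt_continuous_segment F m M CF (l p q) (r p q) ltac:(lra) ltac:(lra))) as E.
    change (P (l p q) + RInt F (l p q) (r p q) = P (r p q)) in E. lra.
  - apply continuity_2d_pt_minus; apply continuity_1d_2d_pt_comp; try assumption;
      apply continuity_pt_filterlim, (continuous_RInt_upper F m M); assumption.
Qed.

Lemma continuity_2d_pt_RInt_param (H : R -> R -> R -> R) (l r : R -> R -> R) p0 q0 m M :
  continuity_2d_pt l p0 q0 -> continuity_2d_pt r p0 q0 ->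
  m < l p0 q0 < M -> m < r p0 q0 < M ->
  locally_2d (fun p q => forall b, m <= b <= M -> continuous (H p q) b) p0 q0 ->
  unif_cont_param H p0 q0 m M ->
  continuity_2d_pt (fun p q => RInt (H p q) (l p q) (r p q)) p0 q0.
Proof.
  intros Hl Hr Hl0 Hr0 Hcont HU eps.
  pose proof (cond_pos eps) as Heps.
  pose proof (locally_2d_singleton _ _ _ Hcont) as C0.
  pose proof (continuity_2d_pt_RInt_bounds (H p0 q0) l r p0 q0 m M C0 Hl Hr Hl0 Hr0
                (mkposreal (eps / 2) ltac:(lra))) as Bounds.
  pose proof (HU (eps / (4 * (M - m))) ltac:(apply Rdiv_lt_0_compat; lra)) as Close.
  apply locally_2d_impl with (2 := locally_2d_and _ _ _ _ Bounds (locally_2d_and _ _ _ _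
    (locally_2d_between l p0 q0 m M Hl Hl0) (locally_2d_and _ _ _ _
    (locally_2d_between r p0 q0 m M Hr Hr0) (locally_2d_and _ _ _ _ Hcont Close)))).
  apply locally_2d_forall. intros p q (B & Hl_in & Hr_in & Cpq & Hclose). simpl in B.
  assert (Diff : Rabs (RInt (H p q) (l p q) (r p q) - RInt (H p0 q0) (l p q) (r p q))
                  <= (M - m) * (eps / (4 * (M - m))))
    by (apply abs_RInt_diff_le_const; auto; try lra; intros b Hb; apply Rlt_le, Hclose, Hb).
  replace ((M - m) * (eps / (4 * (M - m)))) with (eps / 4) in Diff by (field; lra).
  apply Rabs_le_between in Diff. apply Rabs_lt_between in B.
  apply Rabs_lt_between. lra.
Qed.

Section ParamBox.
Variables (F dF : R -> R -> R) (x lo hi d : R).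
Hypothesis HB : forall u t, Rabs (u - x) < d -> lo - d < t < hi + d ->
  is_derive (fun s => F s t) u (dF u t) /\ continuity_2d_pt dF u t /\ continuity_2d_pt F u t.

Lemma continuity_2d_pt_Derive_box u t : 0 < d -> Rabs (u - x) < d / 2 -> lo - d / 2 < t < hi + d / 2 ->
  continuity_2d_pt (fun u' v => Derive (fun z => F z v) u') u t.
Proof.
  intros Hd Hu Ht. assert (Hd2 : 0 < d / 2) by lra.
  apply continuity_2d_pt_ext_loc with dF; [| apply (HB u t); lra].
  exists (mkposreal _ Hd2). intros u' t' Hu' Ht'. simpl in Hu', Ht'.
  symmetry. apply is_derive_unique. apply (HB u' t').
  - apply Rabs_lt_between in Hu. apply Rabs_lt_between in Hu'. apply Rabs_lt_between. lra.
  - apply Rabs_lt_between in Ht'. lra.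
Qed.

Lemma ex_RInt_param_box y a b : Rabs (y - x) < d ->
  lo - d < a < hi + d -> lo - d < b < hi + d -> ex_RInt (F y) a b.
Proof.
  intros Hy Ha Hb. apply (ex_RInt_continuous (V := R_CompleteNormedModule)).
  intros z Hz. apply continuity_2d_pt_continuous_2. apply (HB y z Hy).
  assert (lo - d < Rmin a b) by (apply Rmin_glb_lt; lra).
  assert (Rmax a b < hi + d) by (apply Rmax_lub_lt; lra). lra.
Qed.

End ParamBox.

Lemma is_derive_RInt_param_bounds (F dF : R -> R -> R) (l r : R -> R) x dl dr d :
  0 < d ->
  (forall u t, Rabs (u - x) < d -> Rmin (l x) (r x) - d < t < Rmax (l x) (r x) + d ->
     is_derive (fun s => F s t) u (dF u t) /\ continuity_2d_pt dF u t /\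
     continuity_2d_pt F u t) ->
  is_derive l x dl -> is_derive r x dr ->
  is_derive (fun y => RInt (F y) (l y) (r y)) x
    (RInt (dF x) (l x) (r x) - F x (l x) * dl + F x (r x) * dr).
Proof.
  intros Hd HB Hl Hr.
  set (lo := Rmin (l x) (r x)) in *. set (hi := Rmax (l x) (r x)) in *.
  assert (Hlo : lo <= l x /\ lo <= r x) by (split; [apply Rmin_l | apply Rmin_r]).
  assert (Hhi : l x <= hi /\ r x <= hi) by (split; [apply Rmax_l | apply Rmax_r]).
  assert (Hd2 : 0 < d / 2) by lra.
  assert (Hx0 : Rabs (x - x) < d / 2) by (rewrite Rminus_eq_0, Rabs_R0; lra).
  pose proof (continuity_2d_pt_Derive_box F dF x lo hi d HB) as CD.
  pose proof (ex_RInt_param_box F dF x lo hi d HB) as EXR.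
  assert (Slice : forall t, lo <= t <= hi -> continuity_pt (fun s => F x s) t)
    by (intros t Ht; apply continuity_pt_filterlim, continuity_2d_pt_continuous_2, (HB x t); lra).
  replace (RInt (dF x) (l x) (r x)) with (RInt (fun t => Derive (fun u => F u t) x) (l x) (r x)).
  2: { apply RInt_ext. intros t Ht. apply is_derive_unique. apply (HB x t); [lra|].
       fold lo hi in Ht. lra. }
  replace (RInt (fun t => Derive (fun u => F u t) x) (l x) (r x) - F x (l x) * dl
           + F x (r x) * dr)
    with (RInt (fun t => Derive (fun u => F u t) x) (l x) (r x) + - F x (l x) * dl
          + F x (r x) * dr) by ring.
  apply is_derive_RInt_param_bound_comp; try assumption.
  1: exists (mkposreal _ Hd); intros y Hy; apply EXR; [exact Hy | lra | lra].
  1, 2: exists (mkposreal _ Hd2), (mkposreal _ Hd); intros y Hy;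
        apply EXR; [exact Hy | simpl; lra | simpl; lra].
  1: exists (mkposreal _ Hd2), (mkposreal _ Hd); intros y Hy t Ht; simpl in Ht;
     exists (dF y t); apply (HB y t Hy);
     assert (lo - d / 2 <= Rmin (l x - d / 2) (r x - d / 2))
       by (apply Rmin_glb; apply Rplus_le_compat_r; lra);
     assert (Rmax (l x + d / 2) (r x + d / 2) <= hi + d / 2)
       by (apply Rmax_lub; apply Rplus_le_compat_r; lra); lra.
  1: intros t Ht; apply CD; [exact Hd | exact Hx0 | fold lo hi in Ht; lra].
  1, 2: exists (mkposreal _ Hd2); intros u v Hu Hv; simpl in Hu, Hv;
        apply CD; [exact Hd | exact Hu | apply Rabs_lt_between in Hv; lra].
  all: apply Slice; lra.
Qed.

(** * The unit disc and its chords *)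

Definition in_disc (r a b : R) : Prop := a ^ 2 + b ^ 2 < r ^ 2.

Lemma in_disc_open r a b : in_disc r a b -> locally_2d (in_disc r) a b.
Proof.
  intros H.
  set (phi := fun u v : R => r ^ 2 - (u * u + v * v)).
  assert (Hc : continuity_2d_pt phi a b).
  { apply continuity_2d_pt_minus; [apply continuity_2d_pt_const|].
    apply continuity_2d_pt_plus; apply continuity_2d_pt_mult;
      (apply continuity_2d_pt_id1 || apply continuity_2d_pt_id2). }
  assert (Hp : 0 < phi a b) by (unfold phi, in_disc in *; nra).
  destruct (Hc (mkposreal _ Hp)) as [d Hd].
  exists d. intros u v Hu Hv. specialize (Hd u v Hu Hv). simpl in Hd.
  unfold in_disc, phi in *. apply Rabs_lt_between in Hd. nra.
Qed.

Record C1_pt (f : R -> R -> R) (a b : R) : Prop := {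
  C1_pt_d1 : is_derive (fun s => f s b) a (pd1 f a b);
  C1_pt_d2 : is_derive (fun s => f a s) b (pd2 f a b);
  C1_pt_pd1 : continuity_2d_pt (pd1 f) a b;
  C1_pt_pd2 : continuity_2d_pt (pd2 f) a b;
  C1_pt_diff : differentiable_pt_lim f a b (pd1 f a b) (pd2 f a b);
  C1_pt_cont : continuity_2d_pt f a b }.
Arguments C1_pt_d1 {f a b}. Arguments C1_pt_d2 {f a b}.
Arguments C1_pt_pd1 {f a b}. Arguments C1_pt_pd2 {f a b}.
Arguments C1_pt_diff {f a b}. Arguments C1_pt_cont {f a b}.

Lemma C1_on2_C1_pt (P : R -> R -> Prop) f a b :
  C1_on2 P f -> locally_2d P a b -> C1_pt f a b.
Proof.
  intros HC HP.
  destruct (HC a b (locally_2d_singleton _ _ _ HP)) as (H1 & H2 & H3 & H4).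
  assert (D1 : is_derive (fun s => f s b) a (pd1 f a b)) by (apply Derive_correct, H1).
  assert (Dif : differentiable_pt_lim f a b (pd1 f a b) (pd2 f a b)).
  { apply filterdiff_differentiable_pt_lim.
    eapply filterdiff_ext_lin.
    - apply (is_derive_filterdiff f a b (pd1 f) (pd2 f a b)); [| apply Derive_correct, H2 | exact H3].
      apply (proj1 (locally_2d_locally (fun u v => is_derive (fun z => f z v) u (pd1 f u v)) a b)).
      apply locally_2d_impl with (2 := HP). apply locally_2d_forall. intros u v Puv.
      apply Derive_correct, (HC u v Puv).
    - intros [y1 y2]. simpl. unfold plus, scal; simpl. unfold mult; simpl. ring. }
  split; try assumption.
  - apply Derive_correct, H2.
  - apply continuity_2d_pt_filterlim, H3.
  - apply continuity_2d_pt_filterlim, H4.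
  - apply differentiable_continuity_pt. exists (pd1 f a b), (pd2 f a b). exact Dif.
Qed.

Definition semicircle (a : R) : R := sqrt (1 - a ^ 2).
Definition semicircle' (a : R) : R := - a / semicircle a.

Lemma semicircle_ge0 a : 0 <= semicircle a.
Proof. apply sqrt_pos. Qed.

Lemma semicircle_sq a : -1 <= a <= 1 -> semicircle a ^ 2 = 1 - a ^ 2.
Proof. intros H. unfold semicircle. rewrite pow2_sqrt; [ring | nra]. Qed.

Lemma semicircle_le1 a : semicircle a <= 1.
Proof.
  unfold semicircle. rewrite <- sqrt_1 at 2. apply sqrt_le_1_alt. nra.
Qed.

Lemma semicircle_gt0 a : -1 < a < 1 -> 0 < semicircle a.
Proof. intros H. apply sqrt_lt_R0. nra. Qed.

Lemma semicircle_eq0 a : 1 <= Rabs a -> semicircle a = 0.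
Proof.
  intros H. apply sqrt_neg_0. pose proof (pow2_abs a). pose proof (Rabs_pos a). nra.
Qed.

Lemma semicircle_cos th : semicircle (cos th) = Rabs (sin th).
Proof.
  unfold semicircle. rewrite <- sqrt_Rsqr_abs. f_equal.
  pose proof (sin2_cos2 th). unfold Rsqr in *. simpl. lra.
Qed.

Lemma continuous_semicircle a : continuous semicircle a.
Proof.
  apply continuous_sqrt_comp. apply (continuous_minus (V := R_NormedModule)).
  - apply continuous_const.
  - apply ex_derive_continuous. auto_derive. auto.
Qed.

Lemma is_derive_semicircle a : -1 < a < 1 -> is_derive semicircle a (semicircle' a).
Proof.
  intros H. pose proof (semicircle_gt0 a H) as Hp. unfold semicircle', semicircle in *.
  replace (- a / sqrt (1 - a ^ 2)) with ((- (2 * a)) / (2 * sqrt (1 - a ^ 2))) by (field; lra).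
  apply (is_derive_sqrt (fun x => 1 - x ^ 2) a (- (2 * a))); [auto_derive; [auto | ring] | nra].
Qed.

Lemma continuous_semicircle' a : -1 < a < 1 -> continuous semicircle' a.
Proof.
  intros H. apply continuity_pt_filterlim.
  apply continuity_pt_div; [apply continuity_pt_opp, continuity_pt_id | | ].
  - apply continuity_pt_filterlim, continuous_semicircle.
  - pose proof (semicircle_gt0 a H). lra.
Qed.

Definition margin (e : R) : R := Rmin (e / 8) (1 / 2).

Lemma margin_gt0 e : 0 < e -> 0 < margin e.
Proof. intros. apply Rmin_glb_lt; lra. Qed.

Lemma near_chord_in_disc e a p b : 0 < e -> -1 <= a <= 1 ->
  Rabs (p - a) < 2 * margin e -> Rabs b < semicircle a + 2 * margin e ->
  in_disc (1 + e) p b.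
Proof.
  intros He Ha Hp Hb. unfold in_disc.
  assert (D1 : margin e <= e / 8) by apply Rmin_l.
  assert (D2 : margin e <= 1 / 2) by apply Rmin_r.
  pose proof (margin_gt0 e He).
  pose proof (semicircle_sq a Ha). pose proof (semicircle_ge0 a). pose proof (semicircle_le1 a).
  assert (Hp' : Rabs p < Rabs a + 2 * margin e).
  { replace p with (a + (p - a)) by ring. eapply Rle_lt_trans; [apply Rabs_triang | lra]. }
  assert (Ha' : Rabs a <= 1) by (apply Rabs_le; lra).
  pose proof (pow2_abs p). pose proof (pow2_abs b). pose proof (pow2_abs a).
  pose proof (Rabs_pos p). pose proof (Rabs_pos b). pose proof (Rabs_pos a).
  assert (Rabs p ^ 2 <= (Rabs a + 2 * margin e) ^ 2) by nra.
  assert (Rabs b ^ 2 <= (semicircle a + 2 * margin e) ^ 2) by nra.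
  nra.
Qed.

Lemma on_circle_in_disc e a k : 0 < e -> k ^ 2 = 1 - a ^ 2 -> in_disc (1 + e) a k.
Proof. intros He Hk. unfold in_disc. nra. Qed.

Definition cos2pi (t : R) : R := cos (2 * PI * t).
Definition cos2pi' (t : R) : R := - (2 * PI) * sin (2 * PI * t).

Lemma is_derive_cos2pi t : is_derive cos2pi t (cos2pi' t).
Proof. unfold cos2pi, cos2pi'. auto_derive; [exact I | ring]. Qed.

Lemma continuous_cos2pi' t : continuous cos2pi' t.
Proof.
  apply (ex_derive_continuous (K := R_AbsRing) (V := R_NormedModule)).
  unfold cos2pi'. auto_derive. exact I.
Qed.

Lemma continuous_cos2pi t : continuous cos2pi t.
Proof.
  apply (ex_derive_continuous (K := R_AbsRing) (V := R_NormedModule)).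
  eexists. apply is_derive_cos2pi.
Qed.

Lemma cos2pi_0 : cos2pi 0 = 1.
Proof. unfold cos2pi. rewrite Rmult_0_r. apply cos_0. Qed.

Lemma cos2pi_half_sub h : cos2pi (1 / 2 - h) = - cos2pi h.
Proof.
  unfold cos2pi. replace (2 * PI * (1 / 2 - h)) with (PI - 2 * PI * h) by field.
  rewrite cos_minus, cos_PI, sin_PI. ring.
Qed.

Lemma cos2pi_half_add h : cos2pi (1 / 2 + h) = - cos2pi h.
Proof.
  unfold cos2pi. replace (2 * PI * (1 / 2 + h)) with (PI + 2 * PI * h) by field.
  rewrite cos_plus, cos_PI, sin_PI. ring.
Qed.

Lemma cos2pi_one_sub h : cos2pi (1 - h) = cos2pi h.
Proof.
  unfold cos2pi. replace (2 * PI * (1 - h)) with (2 * PI - 2 * PI * h) by field.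
  rewrite cos_minus, cos_2PI, sin_2PI. ring.
Qed.

Lemma cos_open_interval th : sin th <> 0 -> -1 < cos th < 1.
Proof.
  intros Hs. pose proof (sin2_cos2 th). unfold Rsqr in *.
  assert (0 < sin th * sin th) by (apply Rsqr_pos_lt; exact Hs).
  split; nra.
Qed.

Lemma arc_upper t : 0 < t < 1 / 2 ->
  -1 < cos2pi t < 1 /\ semicircle (cos2pi t) = sin (2 * PI * t).
Proof.
  intros Ht. pose proof PI_RGT_0.
  assert (0 < sin (2 * PI * t)) by (apply sin_gt_0; nra).
  unfold cos2pi. split; [apply cos_open_interval; lra|].
  rewrite semicircle_cos, Rabs_right; lra.
Qed.

Lemma arc_lower t : 1 / 2 < t < 1 ->
  -1 < cos2pi t < 1 /\ - semicircle (cos2pi t) = sin (2 * PI * t).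
Proof.
  intros Ht. pose proof PI_RGT_0.
  assert (sin (2 * PI * t) < 0) by (apply sin_lt_0; nra).
  unfold cos2pi. split; [apply cos_open_interval; lra|].
  rewrite semicircle_cos, Rabs_left; lra.
Qed.

Lemma cos2pi_quarter h : 0 < h < 1 / 4 -> 0 < cos2pi h < 1.
Proof.
  intros Hh. pose proof PI_RGT_0. destruct (arc_upper h ltac:(lra)).
  split; [unfold cos2pi; apply cos_gt_0; nra | lra].
Qed.

Definition clamp01 (t : R) : R := Rmax 0 (Rmin 1 t).

Lemma clamp01_in t : 0 <= clamp01 t <= 1.
Proof.
  unfold clamp01. split; [apply Rmax_l|]. apply Rmax_lub; [lra | apply Rmin_l].
Qed.

Lemma clamp01_id t : 0 <= t <= 1 -> clamp01 t = t.
Proof. intros Ht. unfold clamp01. rewrite Rmin_right, Rmax_right; lra. Qed.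

Lemma continuous_clamp01 t : continuous clamp01 t.
Proof.
  apply continuous_of_eps. intros eps He. exists eps. split; [exact He|]. intros y Hy.
  unfold clamp01. apply Rabs_lt_between in Hy. apply Rabs_lt_between.
  unfold Rmax, Rmin. destruct (Rle_dec 1 y), (Rle_dec 1 t);
  repeat match goal with |- context [Rle_dec ?a ?b] => destruct (Rle_dec a b) end; lra.
Qed.

Lemma continuous_clamped (F : R -> R) t : (forall s, 0 <= s <= 1 -> continuous F s) ->
  continuous (fun s => F (clamp01 s)) t.
Proof.
  intros H. apply (continuous_comp clamp01 F); [apply continuous_clamp01 | apply H, clamp01_in].
Qed.

Lemma eq0_of_continuous_right (E : R -> R) c : 0 < c ->
  continuous E 0 -> (forall h, 0 < h < c -> E h = 0) -> E 0 = 0.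
Proof.
  intros Hc HC HE. destruct (Req_dec (E 0) 0) as [| Hn]; [assumption | exfalso].
  destruct (continuous_eps E 0 HC _ (Rabs_pos_lt _ Hn)) as [d [Hd Hd']].
  set (h := Rmin (d / 2) (c / 2)).
  assert (h <= d / 2) by apply Rmin_l. assert (h <= c / 2) by apply Rmin_r.
  assert (0 < h) by (apply Rmin_glb_lt; lra).
  specialize (Hd' h ltac:(rewrite Rminus_0_r, Rabs_right; lra)).
  rewrite HE in Hd' by lra. rewrite Rminus_0_l, Rabs_Ropp in Hd'. lra.
Qed.

(** * Green's formula on the unit disc *)

Section Green.
Variables (e : R) (f g : R -> R -> R).
Hypothesis He : 0 < e.
Hypothesis Hf : forall p b, in_disc (1 + e) p b -> C1_pt f p b.
Hypothesis Hg : forall p b, in_disc (1 + e) p b -> C1_pt g p b.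

Lemma C1_near_chord a u t : -1 <= a <= 1 ->
  Rabs (u - a) < 2 * margin e -> Rabs t < semicircle a + 2 * margin e ->
  C1_pt f u t /\ C1_pt g u t.
Proof. intros. split; [apply Hf | apply Hg]; apply near_chord_in_disc with a; auto. Qed.

Lemma margin_center a : Rabs (a - a) < 2 * margin e.
Proof. pose proof (margin_gt0 e He). rewrite Rminus_eq_0, Rabs_R0. lra. Qed.

Lemma chord_bounds q t :
  Rmin (- semicircle q) (semicircle q) <= t <= Rmax (- semicircle q) (semicircle q) ->
  - semicircle q <= t <= semicircle q.
Proof.
  pose proof (semicircle_ge0 q).
  rewrite Rmin_left, Rmax_right by lra. auto.
Qed.

Definition chord_integral (A B : R -> R -> R) (p q : R) : R :=
  RInt (fun b => A p b * B q b) (- semicircle q) (semicircle q).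

Definition chord_f_dg (p q : R) : R := chord_integral f (pd2 g) p q.
Definition jac_chord (a : R) : R := RInt (jac f g a) (- semicircle a) (semicircle a).

Definition continuous_where_C1 (A : R -> R -> R) : Prop :=
  forall u t, C1_pt f u t -> C1_pt g u t -> continuity_2d_pt A u t.

Lemma continuous_chord_product a (A B : R -> R -> R) p q b :
  -1 <= a <= 1 -> Rabs (p - a) < 2 * margin e -> Rabs (q - a) < 2 * margin e ->
  Rabs b < semicircle a + 2 * margin e -> continuous_where_C1 A -> continuous_where_C1 B ->
  continuous (fun b => A p b * B q b) b.
Proof.
  intros Ha Hp Hq Hb HA HB.
  destruct (C1_near_chord a p b Ha Hp Hb). destruct (C1_near_chord a q b Ha Hq Hb).
  apply continuous_mult_R; apply continuity_2d_pt_continuous_2; [apply HA | apply HB]; assumption.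
Qed.

Lemma continuity_2d_pt_chord_integral a (A B : R -> R -> R) :
  -1 <= a <= 1 -> continuous_where_C1 A -> continuous_where_C1 B ->
  continuity_2d_pt (chord_integral A B) a a.
Proof.
  intros Ha HA HB. pose proof (margin_gt0 e He) as Hd. pose proof (semicircle_ge0 a).
  set (m := - semicircle a - margin e). set (M := semicircle a + margin e).
  assert (Hb : forall b, m <= b <= M -> Rabs b < semicircle a + 2 * margin e)
    by (intros b Hb; unfold m, M in Hb; apply Rabs_lt_between; lra).
  assert (Near : forall b, m <= b <= M -> C1_pt f a b /\ C1_pt g a b)
    by (intros b Hmb; exact (C1_near_chord a a b Ha (margin_center a) (Hb b Hmb))).
  apply (continuity_2d_pt_RInt_param (fun p q b => A p b * B q b)
           (fun p q => - semicircle q) (fun p q => semicircle q) a a m M).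
  - apply continuity_2d_pt_lift, continuous_opp_R, continuous_semicircle.
  - apply continuity_2d_pt_lift, continuous_semicircle.
  - unfold m, M; lra.
  - unfold m, M; lra.
  - exists (mkposreal _ Hd). intros p q Hp Hq b Hmb.
    apply (continuous_chord_product a); auto; simpl in *; lra.
  - apply unif_cont_param_mult; [unfold m, M; lra | | | |].
    + apply unif_cont_param_1; [unfold m, M; lra|].
      intros b Hmb. destruct (Near b Hmb). apply HA; assumption.
    + apply unif_cont_param_2; [unfold m, M; lra|].
      intros b Hmb. destruct (Near b Hmb). apply HB; assumption.
    + intros b Hmb. destruct (Near b Hmb). apply continuity_2d_pt_continuous_2, HA; assumption.
    + intros b Hmb. destruct (Near b Hmb). apply continuity_2d_pt_continuous_2, HB; assumption.
Qed.

Lemma continuous_where_C1_f : continuous_where_C1 f.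
Proof. intros u t Cf _. exact (C1_pt_cont Cf). Qed.
Lemma continuous_where_C1_pd1_f : continuous_where_C1 (pd1 f).
Proof. intros u t Cf _. exact (C1_pt_pd1 Cf). Qed.
Lemma continuous_where_C1_pd2_f : continuous_where_C1 (pd2 f).
Proof. intros u t Cf _. exact (C1_pt_pd2 Cf). Qed.
Lemma continuous_where_C1_pd1_g : continuous_where_C1 (pd1 g).
Proof. intros u t _ Cg. exact (C1_pt_pd1 Cg). Qed.
Lemma continuous_where_C1_pd2_g : continuous_where_C1 (pd2 g).
Proof. intros u t _ Cg. exact (C1_pt_pd2 Cg). Qed.

Lemma semicircle_near a : exists rho, 0 < rho /\ rho <= margin e /\
  forall q, Rabs (q - a) < rho -> Rabs (semicircle q - semicircle a) < margin e.
Proof.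
  destruct (continuous_eps semicircle a (continuous_semicircle a) (margin e) (margin_gt0 e He))
    as [r [Hr Hr']].
  exists (Rmin r (margin e)). split; [apply Rmin_glb_lt; auto; apply margin_gt0; auto|].
  split; [apply Rmin_r|]. intros q Hq. apply Hr'. eapply Rlt_le_trans; [exact Hq | apply Rmin_l].
Qed.

Lemma is_derive_chord_f_dg_1 a p q : -1 <= a <= 1 ->
  Rabs (p - a) < margin e -> Rabs (q - a) < margin e ->
  Rabs (semicircle q - semicircle a) < margin e ->
  is_derive (fun z => chord_f_dg z q) p (chord_integral (pd1 f) (pd2 g) p q).
Proof.
  intros Ha Hp Hq Hh. pose proof (margin_gt0 e He) as Hd. pose proof (semicircle_ge0 q).
  unfold chord_f_dg, chord_integral.
  replace (RInt (fun b => pd1 f p b * pd2 g q b) (- semicircle q) (semicircle q)) with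
    (RInt (fun b => pd1 f p b * pd2 g q b) (- semicircle q) (semicircle q)
     - (f p (- semicircle q) * pd2 g q (- semicircle q)) * 0
     + (f p (semicircle q) * pd2 g q (semicircle q)) * 0) by ring.
  apply (is_derive_RInt_param_bounds (fun s t => f s t * pd2 g q t)
    (fun s t => pd1 f s t * pd2 g q t) (fun _ => - semicircle q) (fun _ => semicircle q)
    p 0 0 (margin e) Hd); [| apply is_derive_const_R ..].
  intros u t Hu Ht. cbv beta in Ht. rewrite Rmin_left, Rmax_right in Ht by lra.
  assert (Hta : Rabs t < semicircle a + 2 * margin e).
  { apply Rabs_lt_between in Hh. apply Rabs_lt_between. lra. }
  destruct (C1_near_chord a u t Ha ltac:(apply Rabs_lt_between in Hu;
    apply Rabs_lt_between in Hp; apply Rabs_lt_between; lra) Hta) as [Cf _].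
  destruct (C1_near_chord a q t Ha ltac:(lra) Hta) as [_ Cg].
  pose proof (continuity_2d_pt_lift _ u t (continuity_2d_pt_continuous_2 _ _ _ (C1_pt_pd2 Cg))).
  split; [| split].
  - exact (is_derive_scal_l _ _ _ _ (C1_pt_d1 Cf)).
  - apply continuity_2d_pt_mult; [exact (C1_pt_pd1 Cf) | assumption].
  - apply continuity_2d_pt_mult; [exact (C1_pt_cont Cf) | assumption].
Qed.

Definition chord_ends (a q : R) : R :=
  f a (semicircle q) * g q (semicircle q) - f a (- semicircle q) * g q (- semicircle q).

Lemma chord_f_dg_by_parts a q : -1 <= a <= 1 -> Rabs (q - a) < margin e ->
  Rabs (semicircle q - semicircle a) < margin e ->
  chord_f_dg a q = chord_ends a q - chord_integral (pd2 f) g a q.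
Proof.
  intros Ha Hq Hh. pose proof (margin_gt0 e He). unfold chord_f_dg, chord_ends, chord_integral.
  rewrite (integration_by_parts (f a) (g q) (pd2 f a) (pd2 g q)); [reflexivity|].
  intros t Ht. apply chord_bounds in Ht.
  assert (Hta : Rabs t < semicircle a + 2 * margin e)
    by (apply Rabs_lt_between in Hh; apply Rabs_lt_between; lra).
  destruct (C1_near_chord a a t Ha (margin_center a) Hta) as [Cf _].
  destruct (C1_near_chord a q t Ha ltac:(lra) Hta) as [_ Cg].
  split; [exact (C1_pt_d2 Cf)|]. split; [exact (C1_pt_d2 Cg)|].
  split; apply continuity_2d_pt_continuous_2; [exact (C1_pt_pd2 Cf) | exact (C1_pt_pd2 Cg)].
Qed.

Definition chord_integral_deriv (a : R) : R :=
  chord_integral (pd2 f) (pd1 g) a a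
  - (pd2 f a (- semicircle a) * g a (- semicircle a)) * (- semicircle' a)
  + (pd2 f a (semicircle a) * g a (semicircle a)) * semicircle' a.

Lemma is_derive_chord_integral_2 a : -1 < a < 1 ->
  is_derive (chord_integral (pd2 f) g a) a (chord_integral_deriv a).
Proof.
  intros Ha. pose proof (margin_gt0 e He) as Hd. pose proof (semicircle_ge0 a).
  unfold chord_integral, chord_integral_deriv.
  apply (is_derive_RInt_param_bounds (fun s t => pd2 f a t * g s t)
    (fun s t => pd2 f a t * pd1 g s t) (fun q => - semicircle q) semicircle a
    (- semicircle' a) (semicircle' a) (margin e) Hd).
  - intros u t Hu Ht. cbv beta in Ht. rewrite Rmin_left, Rmax_right in Ht by lra.
    assert (Hta : Rabs t < semicircle a + 2 * margin e) by (apply Rabs_lt_between; lra).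
    destruct (C1_near_chord a a t ltac:(lra) (margin_center a) Hta) as [Cf _].
    destruct (C1_near_chord a u t ltac:(lra) ltac:(lra) Hta) as [_ Cg].
    pose proof (continuity_2d_pt_lift _ u t (continuity_2d_pt_continuous_2 _ _ _ (C1_pt_pd2 Cf))).
    split; [| split].
    + exact (is_derive_scal _ _ _ _ (C1_pt_d1 Cg)).
    + apply continuity_2d_pt_mult; [assumption | exact (C1_pt_pd1 Cg)].
    + apply continuity_2d_pt_mult; [assumption | exact (C1_pt_cont Cg)].
  - apply is_derive_opp_R, is_derive_semicircle, Ha.
  - apply is_derive_semicircle, Ha.
Qed.

Definition chord_ends_deriv (a : R) : R :=
  (pd2 f a (semicircle a) * semicircle' a) * g a (semicircle a)
  + f a (semicircle a) * (pd1 g a (semicircle a) * 1 + pd2 g a (semicircle a) * semicircle' a)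
  - ((pd2 f a (- semicircle a) * (- semicircle' a)) * g a (- semicircle a)
     + f a (- semicircle a)
       * (pd1 g a (- semicircle a) * 1 + pd2 g a (- semicircle a) * (- semicircle' a))).

Lemma is_derive_chord_ends a : -1 < a < 1 ->
  is_derive (chord_ends a) a (chord_ends_deriv a).
Proof.
  intros Ha. pose proof (margin_gt0 e He). pose proof (semicircle_ge0 a).
  pose proof (is_derive_semicircle a Ha) as Ds.
  pose proof (is_derive_opp_R _ _ _ Ds) as Dms.
  assert (Hp : Rabs (semicircle a) < semicircle a + 2 * margin e)
    by (rewrite Rabs_right; lra).
  assert (Hm : Rabs (- semicircle a) < semicircle a + 2 * margin e)
    by (rewrite Rabs_Ropp, Rabs_right; lra).
  destruct (C1_near_chord a a _ ltac:(lra) (margin_center a) Hp) as [Cfp Cgp].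
  destruct (C1_near_chord a a _ ltac:(lra) (margin_center a) Hm) as [Cfm Cgm].
  unfold chord_ends, chord_ends_deriv.
  apply is_derive_minus_R; apply (is_derive_mult_R (fun q => f a _) (fun q => g q _)).
  - exact (is_derive_comp_R (fun s => f a s) semicircle a _ _ (C1_pt_d2 Cfp) Ds).
  - exact (is_derive_comp_2d g (fun y => y) semicircle a _ _ _ _ (C1_pt_diff Cgp)
             (is_derive_id_R a) Ds).
  - exact (is_derive_comp_R (fun s => f a s) (fun y => - semicircle y) a _ _
             (C1_pt_d2 Cfm) Dms).
  - exact (is_derive_comp_2d g (fun y => y) (fun y => - semicircle y) a _ _ _ _
             (C1_pt_diff Cgm) (is_derive_id_R a) Dms).
Qed.

Lemma is_derive_chord_f_dg_2 a : -1 < a < 1 ->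
  is_derive (chord_f_dg a) a (chord_ends_deriv a - chord_integral_deriv a).
Proof.
  intros Ha. destruct (semicircle_near a) as [rho [Hr [Hr' Hh]]].
  apply (is_derive_ext_loc (fun q => chord_ends a q - chord_integral (pd2 f) g a q)).
  - exists (mkposreal _ Hr). intros q Hq. change (Rabs (q - a) < rho) in Hq.
    symmetry. apply chord_f_dg_by_parts; [lra | lra | exact (Hh q Hq)].
  - apply is_derive_minus_R; [apply is_derive_chord_ends | apply is_derive_chord_integral_2];
      exact Ha.
Qed.

Lemma jac_chord_split y :
  jac_chord y = chord_integral (pd1 f) (pd2 g) y y - chord_integral (pd2 f) (pd1 g) y y.
Proof.
  destruct (Rle_dec (Rabs y) 1) as [Hy | Hy].
  - apply Rabs_le_between in Hy. pose proof (margin_gt0 e He).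
    assert (Ex : forall A B, continuous_where_C1 A -> continuous_where_C1 B ->
      ex_RInt (fun b => A y b * B y b) (- semicircle y) (semicircle y)).
    { intros A B HA HB. apply (ex_RInt_continuous (V := R_CompleteNormedModule)).
      intros t Ht. apply chord_bounds in Ht.
      apply (continuous_chord_product y); auto; try apply margin_center.
      apply Rabs_lt_between; lra. }
    apply RInt_minus_R; apply Ex;
      auto using continuous_where_C1_pd1_f, continuous_where_C1_pd2_f, continuous_where_C1_pd1_g, continuous_where_C1_pd2_g.
  - unfold jac_chord, chord_integral.
    rewrite !RInt_opp_point by (apply semicircle_eq0; lra). ring.
Qed.

Definition boundary_density (k dk : R -> R) (a : R) : R :=
  f a (k a) * (pd1 g a (k a) + pd2 g a (k a) * dk a).

Definition boundary_flux (a : R) : R :=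
  boundary_density semicircle semicircle' a
  - boundary_density (fun a => - semicircle a) (fun a => - semicircle' a) a.

Lemma is_derive_chord_f_dg_diag a : -1 < a < 1 ->
  is_derive (fun s => chord_f_dg s s) a (jac_chord a + boundary_flux a).
Proof.
  intros Ha. pose proof (margin_gt0 e He) as Hd.
  destruct (semicircle_near a) as [rho [Hr [Hr' Hh]]].
  assert (Dif : differentiable_pt_lim chord_f_dg a a (chord_integral (pd1 f) (pd2 g) a a)
                  (chord_ends_deriv a - chord_integral_deriv a)).
  { apply filterdiff_differentiable_pt_lim. eapply filterdiff_ext_lin.
    - apply (is_derive_filterdiff chord_f_dg a a (chord_integral (pd1 f) (pd2 g))).
      + apply (proj1 (locally_2d_locally
          (fun p q => is_derive (fun z => chord_f_dg z q) p (chord_integral (pd1 f) (pd2 g) p q)) a a)).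
        exists (mkposreal _ Hr). intros p q Hp Hq. simpl in Hp, Hq.
        apply (is_derive_chord_f_dg_1 a); [lra | lra | lra | exact (Hh q Hq)].
      + exact (is_derive_chord_f_dg_2 a Ha).
      + apply continuity_2d_pt_filterlim, continuity_2d_pt_chord_integral;
          [simpl; lra | apply continuous_where_C1_pd1_f | apply continuous_where_C1_pd2_g].
    - intros [y1 y2]. simpl. unfold plus, scal; simpl. unfold mult; simpl. ring. }
  assert (D := is_derive_comp_2d chord_f_dg (fun y => y) (fun y => y) a 1 1 _ _ Dif
                 (is_derive_id_R a) (is_derive_id_R a)).
  replace (jac_chord a + boundary_flux a) with
    (chord_integral (pd1 f) (pd2 g) a a * 1 + (chord_ends_deriv a - chord_integral_deriv a) * 1).
  - exact D.
  - rewrite jac_chord_split. unfold chord_ends_deriv, chord_integral_deriv, boundary_flux,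
      boundary_density. ring.
Qed.

Lemma continuous_jac_chord a : continuous jac_chord a.
Proof.
  destruct (Rle_dec (Rabs a) 1) as [Ha | Ha].
  - apply Rabs_le_between in Ha.
    apply continuous_ext with (fun s => chord_integral (pd1 f) (pd2 g) s s
                                        - chord_integral (pd2 f) (pd1 g) s s).
    + intros y. symmetry. apply jac_chord_split.
    + apply (continuous_minus (V := R_NormedModule)); apply continuous_diag;
        apply continuity_2d_pt_chord_integral;
        auto using continuous_where_C1_pd1_f, continuous_where_C1_pd2_f, continuous_where_C1_pd1_g, continuous_where_C1_pd2_g.
  - apply continuous_of_eps. intros eps Heps.
    exists (Rabs a - 1). split; [lra|]. intros y Hy.
    assert (Hy' : 1 <= Rabs y).
    { pose proof (Rabs_triang_inv a y). rewrite <- Rabs_Ropp, Ropp_minus_distr in Hy. lra. }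
    unfold jac_chord. rewrite !RInt_opp_point by (apply semicircle_eq0; lra).
    rewrite Rminus_eq_0, Rabs_R0. exact Heps.
Qed.

Lemma continuous_chord_f_dg_diag a : -1 <= a <= 1 -> continuous (fun s => chord_f_dg s s) a.
Proof.
  intros Ha. apply continuous_diag, continuity_2d_pt_chord_integral;
    [exact Ha | apply continuous_where_C1_f | apply continuous_where_C1_pd2_g].
Qed.

Definition circle_branch (k dk : R -> R) : Prop :=
  forall a, -1 < a < 1 -> is_derive k a (dk a) /\ continuous dk a /\ k a ^ 2 = 1 - a ^ 2.

Lemma circle_branch_upper : circle_branch semicircle semicircle'.
Proof.
  intros a Ha. split; [|split].
  - apply is_derive_semicircle, Ha.
  - apply continuous_semicircle', Ha.
  - apply semicircle_sq. lra.
Qed.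

Lemma circle_branch_lower :
  circle_branch (fun a => - semicircle a) (fun a => - semicircle' a).
Proof.
  intros a Ha. destruct (circle_branch_upper a Ha) as (D & C & S). split; [|split].
  - apply is_derive_opp_R, D.
  - apply continuous_opp_R, C.
  - rewrite <- S. ring.
Qed.

Lemma continuous_boundary_density k dk a : circle_branch k dk -> -1 < a < 1 ->
  continuous (boundary_density k dk) a.
Proof.
  intros Hk Ha. destruct (Hk a Ha) as (Kd & Cd & Hs).
  assert (Ck : continuous k a)
    by (apply (ex_derive_continuous (K := R_AbsRing) (V := R_NormedModule)); eexists; eauto).
  pose proof (Hf a (k a) (on_circle_in_disc e a (k a) He Hs)) as Cf.
  pose proof (Hg a (k a) (on_circle_in_disc e a (k a) He Hs)) as Cg.
  apply continuous_mult_R; [apply continuous_graph; [exact (C1_pt_cont Cf) | exact Ck]|].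
  apply (continuous_plus (V := R_NormedModule));
    [| apply continuous_mult_R; [| exact Cd]]; apply continuous_graph; try exact Ck.
  - exact (C1_pt_pd1 Cg).
  - exact (C1_pt_pd2 Cg).
Qed.

Lemma RInt_jac_chord be : 0 < be < 1 ->
  RInt jac_chord (- be) be = chord_f_dg be be - chord_f_dg (- be) (- be) - RInt boundary_flux (- be) be.
Proof.
  intros Hb.
  assert (Seg : forall x, Rmin (- be) be <= x <= Rmax (- be) be -> -1 < x < 1)
    by (intros x Hx; rewrite Rmin_left, Rmax_right in Hx by lra; lra).
  assert (Cb : forall x, Rmin (- be) be <= x <= Rmax (- be) be -> continuous boundary_flux x).
  { intros x Hx. apply (continuous_minus (V := R_NormedModule));
      apply continuous_boundary_density; auto using circle_branch_upper, circle_branch_lower. }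
  assert (HI := is_RInt_derive (V := R_CompleteNormedModule) (fun s => chord_f_dg s s)
    (fun a => jac_chord a + boundary_flux a) (- be) be
    ltac:(intros; apply is_derive_chord_f_dg_diag; auto)
    ltac:(intros; apply (continuous_plus (V := R_NormedModule));
            auto using continuous_jac_chord)).
  apply is_RInt_unique in HI.
  change (RInt (fun a => jac_chord a + boundary_flux a) (- be) be
          = chord_f_dg be be - chord_f_dg (- be) (- be)) in HI.
  rewrite RInt_plus_R in HI by (apply (ex_RInt_continuous (V := R_CompleteNormedModule));
    auto using continuous_jac_chord).
  lra.
Qed.

Variables (x1 x2 : R -> R).
Hypothesis Hcap : forall t, 0 <= t <= 1 ->
  f (cos (2 * PI * t)) (sin (2 * PI * t)) = x1 t /\ g (cos (2 * PI * t)) (sin (2 * PI * t)) = x2 t.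
Hypothesis Hcx : forall t, 0 <= t <= 1 -> continuous x1 t /\ continuous (Derive x2) t.

Definition arc_of (k : R -> R) (lo hi : R) : Prop :=
  forall s, lo <= s <= hi -> -1 < cos2pi s < 1 /\ k (cos2pi s) = sin (2 * PI * s).

Lemma is_derive_x2_on_arc k dk lo hi t : circle_branch k dk -> arc_of k lo hi ->
  0 < lo -> hi < 1 -> lo < t < hi ->
  is_derive x2 t (pd1 g (cos2pi t) (k (cos2pi t)) * cos2pi' t
                  + pd2 g (cos2pi t) (k (cos2pi t)) * (dk (cos2pi t) * cos2pi' t)).
Proof.
  intros Hk Harc Hlo Hhi Ht.
  destruct (Harc t ltac:(lra)) as [Hc _]. destruct (Hk _ Hc) as (Kd & _ & Hs).
  apply (is_derive_ext_loc (fun s => g (cos2pi s) (k (cos2pi s)))).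
  - assert (Hd : 0 < Rmin (t - lo) (hi - t)) by (apply Rmin_glb_lt; lra).
    exists (mkposreal _ Hd). intros s Hs'. change (Rabs (s - t) < Rmin (t - lo) (hi - t)) in Hs'.
    pose proof (Rmin_l (t - lo) (hi - t)). pose proof (Rmin_r (t - lo) (hi - t)).
    apply Rabs_lt_between in Hs'.
    rewrite (proj2 (Harc s ltac:(lra))). apply Hcap. lra.
  - apply is_derive_comp_2d; [| apply is_derive_cos2pi |].
    + apply C1_pt_diff, Hg, on_circle_in_disc; assumption.
    + apply is_derive_comp_R; [exact Kd | apply is_derive_cos2pi].
Qed.

Lemma RInt_boundary_density_arc k dk t1 t2 : circle_branch k dk ->
  arc_of k (Rmin t1 t2) (Rmax t1 t2) -> 0 < Rmin t1 t2 -> Rmax t1 t2 < 1 ->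
  RInt (boundary_density k dk) (cos2pi t1) (cos2pi t2)
  = RInt (fun t => x1 t * Derive x2 t) t1 t2.
Proof.
  intros Hk Harc Hmin Hmax.
  rewrite <- (RInt_comp (V := R_CompleteNormedModule) (boundary_density k dk) cos2pi cos2pi').
  - apply RInt_ext. intros t Ht.
    destruct (Harc t ltac:(lra)) as [Hc Hks].
    rewrite (is_derive_unique _ _ _ (is_derive_x2_on_arc k dk _ _ t Hk Harc Hmin Hmax Ht)).
    unfold boundary_density. rewrite Hks.
    replace (f (cos2pi t) (sin (2 * PI * t))) with (x1 t) by (symmetry; apply Hcap; lra).
    unfold scal; simpl; unfold mult; simpl. ring.
  - intros x Hx. apply continuous_boundary_density; [exact Hk | apply Harc, Hx].
  - intros x Hx. split; [apply is_derive_cos2pi | apply continuous_cos2pi'].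
Qed.

Lemma RInt_boundary_flux_arcs h : 0 < h < 1 / 4 ->
  RInt boundary_flux (- cos2pi h) (cos2pi h)
  = RInt (fun t => x1 t * Derive x2 t) (1 / 2 - h) h
    - RInt (fun t => x1 t * Derive x2 t) (1 / 2 + h) (1 - h).
Proof.
  intros Hh. pose proof (cos2pi_quarter h Hh) as Hb.
  assert (Seg : forall z, Rmin (- cos2pi h) (cos2pi h) <= z <= Rmax (- cos2pi h) (cos2pi h) ->
                -1 < z < 1) by (intros z Hz; rewrite Rmin_left, Rmax_right in Hz; lra).
  unfold boundary_flux. rewrite RInt_minus_R;
    [| apply (ex_RInt_continuous (V := R_CompleteNormedModule)); intros z Hz;
       apply continuous_boundary_density; auto using circle_branch_upper, circle_branch_lower ..].
  assert (Up : RInt (boundary_density semicircle semicircle') (- cos2pi h) (cos2pi h)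
               = RInt (fun t => x1 t * Derive x2 t) (1 / 2 - h) h).
  { rewrite <- cos2pi_half_sub.
    apply RInt_boundary_density_arc; [exact circle_branch_upper | | |];
      rewrite ?Rmin_right, ?Rmax_left by lra; [intros s Hs; apply arc_upper | |]; lra. }
  assert (Lo : RInt (boundary_density (fun a => - semicircle a) (fun a => - semicircle' a))
                 (- cos2pi h) (cos2pi h)
               = RInt (fun t => x1 t * Derive x2 t) (1 / 2 + h) (1 - h)).
  { rewrite <- cos2pi_half_add, <- (cos2pi_one_sub h).
    apply RInt_boundary_density_arc; [exact circle_branch_lower | | |];
      rewrite ?Rmin_left, ?Rmax_right by lra; [intros s Hs; apply arc_lower | |]; lra. }
  rewrite Up, Lo. reflexivity.
Qed.

Definition clamped_action (s : R) : R := x1 (clamp01 s) * Derive x2 (clamp01 s).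

Lemma continuous_clamped_action s : continuous clamped_action s.
Proof.
  apply continuous_mult_R; apply (continuous_clamped _ s); intros; apply Hcx; assumption.
Qed.

Lemma RInt_action a b : 0 <= a <= 1 -> 0 <= b <= 1 ->
  RInt (fun t => x1 t * Derive x2 t) a b = RInt clamped_action 0 b - RInt clamped_action 0 a.
Proof.
  intros Ha Hb. rewrite <- RInt_Chasles_0 by apply continuous_clamped_action.
  apply RInt_ext. intros t Ht. unfold clamped_action. rewrite clamp01_id; [reflexivity|].
  pose proof (Rmin_glb a b 0 (proj1 Ha) (proj1 Hb)).
  pose proof (Rmax_lub a b 1 (proj2 Ha) (proj2 Hb)). lra.
Qed.

(* For 0 < h < 1/4 this vanishes by [RInt_jac_chord] and [RInt_boundary_flux_arcs]; at h = 0
   it is the difference of the two sides of Green's formula, which thus holds by continuity. *)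
Definition green_defect (h : R) : R :=
  RInt jac_chord 0 (cos2pi h) - RInt jac_chord 0 (- cos2pi h)
  - chord_f_dg (cos2pi h) (cos2pi h) + chord_f_dg (- cos2pi h) (- cos2pi h)
  - (RInt clamped_action 0 (1 / 2 - h) - RInt clamped_action 0 h)
  - (RInt clamped_action 0 (1 - h) - RInt clamped_action 0 (1 / 2 + h)).

Lemma green_defect_eq0 h : 0 < h < 1 / 4 -> green_defect h = 0.
Proof.
  intros Hh. pose proof (cos2pi_quarter h Hh) as Hb.
  pose proof (RInt_jac_chord _ Hb) as Ftc.
  rewrite RInt_boundary_flux_arcs, !RInt_action in Ftc by lra.
  rewrite (RInt_Chasles_0 jac_chord) in Ftc by apply continuous_jac_chord.
  unfold green_defect. lra.
Qed.

Lemma continuous_green_defect : continuous green_defect 0.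
Proof.
  assert (Cjac : forall z, continuous (fun z => RInt jac_chord 0 z) z)
    by (intros; apply continuous_primitive, continuous_jac_chord).
  assert (Cact : forall c s, continuous (fun h => RInt clamped_action 0 (c + s * h)) 0).
  { intros c s. apply (continuous_comp (fun h => c + s * h) (fun z => RInt clamped_action 0 z)).
    - apply (ex_derive_continuous (K := R_AbsRing) (V := R_NormedModule)).
      auto_derive. exact I.
    - apply continuous_primitive, continuous_clamped_action. }
  assert (Cm : continuous (fun h => - cos2pi h) 0) by apply continuous_opp_R, continuous_cos2pi.
  assert (Cdiag : forall s, s = 1 \/ s = -1 -> continuous (fun s => chord_f_dg s s) s)
    by (intros s [-> | ->]; apply continuous_chord_f_dg_diag; lra).
  unfold green_defect.
  repeat match goal with
  | |- continuous (fun h => _ - _) _ => apply (continuous_minus (V := R_NormedModule))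
  | |- continuous (fun h => _ + _) _ => apply (continuous_plus (V := R_NormedModule))
  end.
  - apply (continuous_comp cos2pi (fun z => RInt jac_chord 0 z)); auto using continuous_cos2pi.
  - apply (continuous_comp (fun h => - cos2pi h) (fun z => RInt jac_chord 0 z)); auto.
  - apply (continuous_comp cos2pi (fun s => chord_f_dg s s)); [apply continuous_cos2pi|].
    apply Cdiag. rewrite cos2pi_0. auto.
  - apply (continuous_comp (fun h => - cos2pi h) (fun s => chord_f_dg s s)); [exact Cm|].
    apply Cdiag. rewrite cos2pi_0. auto.
  - apply (continuous_ext (fun h => RInt clamped_action 0 (1 / 2 + -1 * h)));
      [intros; f_equal; ring | apply Cact].
  - apply (continuous_ext (fun h => RInt clamped_action 0 (0 + 1 * h)));
      [intros; f_equal; ring | apply Cact].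
  - apply (continuous_ext (fun h => RInt clamped_action 0 (1 + -1 * h)));
      [intros; f_equal; ring | apply Cact].
  - apply (continuous_ext (fun h => RInt clamped_action 0 (1 / 2 + 1 * h)));
      [intros; f_equal; ring | apply Cact].
Qed.

Theorem green_disc : RInt jac_chord (-1) 1 = RInt (fun t => x1 t * Derive x2 t) 0 1.
Proof.
  pose proof (eq0_of_continuous_right green_defect (1 / 4) ltac:(lra)
                continuous_green_defect green_defect_eq0) as H0.
  unfold green_defect in H0. rewrite cos2pi_0 in H0.
  assert (S : forall s, s = 1 \/ s = -1 -> chord_f_dg s s = 0).
  { intros s Hs. apply RInt_opp_point, semicircle_eq0.
    destruct Hs as [-> | ->]; [rewrite Rabs_R1 | rewrite Rabs_left]; lra. }
  rewrite !S in H0 by auto.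
  rewrite (RInt_action 0 1), (RInt_Chasles_0 jac_chord) by (auto using continuous_jac_chord; lra).
  replace (1 / 2 - 0) with (1 / 2) in H0 by ring. replace (1 / 2 + 0) with (1 / 2) in H0 by ring.
  replace (1 - 0) with 1 in H0 by ring. replace (- (1)) with (-1) in H0 by ring. lra.
Qed.

End Green.

(** * The winding number as an integral *)

Lemma sin_eq0_continuous_const (D : R -> R) : (forall t, continuous D t) ->
  (forall t, 0 <= t <= 1 -> sin (D t) = 0) -> D 0 = 0 -> D 1 = 0.
Proof.
  intros Hc Hs D0. pose proof PI_RGT_0.
  assert (Hc' : continuity D) by (intros x; apply continuity_pt_filterlim, Hc).
  destruct (sin_eq_0_0 _ (Hs 1 ltac:(lra))) as [k Hk].
  destruct (Z.eq_dec k 0) as [-> | Hk0]; [rewrite Hk; ring | exfalso].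
  destruct (Z.lt_ge_cases 0 k) as [Hpos | Hneg].
  - assert (1 <= IZR k) by (apply IZR_le; lia).
    destruct (IVT_gen D 0 1 (PI / 2) Hc') as [x [Hx Ex]].
    { rewrite D0, Hk, Rmin_left, Rmax_right by nra. split; nra. }
    rewrite Rmin_left, Rmax_right in Hx by lra.
    pose proof (Hs x Hx) as S. rewrite Ex, sin_PI2 in S. lra.
  - assert (IZR k <= -1) by (apply IZR_le; lia).
    destruct (IVT_gen D 0 1 (- (PI / 2)) Hc') as [x [Hx Ex]].
    { rewrite D0, Hk, Rmin_right, Rmax_left by nra. split; nra. }
    rewrite Rmin_left, Rmax_right in Hx by lra.
    pose proof (Hs x Hx) as S. rewrite Ex, sin_neg, sin_PI2 in S. lra.
Qed.

Lemma continuous_clamped_within (th : R -> R) t :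
  (forall s, 0 <= s <= 1 ->
     filterlim th (within (fun s => 0 <= s <= 1) (locally s)) (locally (th s))) ->
  continuous (fun s => th (clamp01 s)) t.
Proof.
  intros H. unfold continuous.
  apply (filterlim_comp _ _ _ clamp01 th (locally t)
           (within (fun s => 0 <= s <= 1) (locally (clamp01 t)))); [| apply H, clamp01_in].
  intros P HP. specialize (continuous_clamp01 t _ HP). unfold filtermap.
  apply filter_imp. intros y Hy. apply Hy, clamp01_in.
Qed.

Definition areal_speed (x1 x2 : R -> R) (t : R) : R :=
  x1 t * Derive x2 t - x2 t * Derive x1 t.

Definition angular_speed (x1 x2 : R -> R) (t : R) : R :=
  areal_speed x1 x2 t / (x1 t ^ 2 + x2 t ^ 2).

Lemma is_derive_angle_mismatch (x1 x2 ph : R -> R) t d1 d2 :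
  is_derive x1 t d1 -> is_derive x2 t d2 ->
  is_derive ph t ((x1 t * d2 - x2 t * d1) / (x1 t ^ 2 + x2 t ^ 2)) ->
  0 < x1 t ^ 2 + x2 t ^ 2 ->
  is_derive (fun s => (x2 s * cos (ph s) - x1 s * sin (ph s)) ^ 2 / (x1 s ^ 2 + x2 s ^ 2)) t 0.
Proof.
  intros H1 H2 H3 Hp.
  auto_derive.
  - repeat split; try (eexists; eassumption). simpl in Hp. lra.
  - change (Derive (fun x : R => x1 x) t) with (Derive x1 t).
    change (Derive (fun x : R => x2 x) t) with (Derive x2 t).
    change (Derive (fun x : R => ph x) t) with (Derive ph t).
    rewrite (is_derive_unique _ _ _ H1), (is_derive_unique _ _ _ H2), (is_derive_unique _ _ _ H3).
    simpl in Hp. field. lra.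
Qed.

Section Winding.
Variables (x1 x2 th : R -> R).
Hypothesis HC1 : C1_curve x1 x2.
Hypothesis Hr : forall t, 0 <= t <= 1 -> 0 < x1 t ^ 2 + x2 t ^ 2.
Hypothesis Hthc : forall t, 0 <= t <= 1 ->
  filterlim th (within (fun s => 0 <= s <= 1) (locally t)) (locally (th t)).
Hypothesis Hth : forall t, 0 <= t <= 1 ->
  x1 t = sqrt (x1 t ^ 2 + x2 t ^ 2) * cos (th t) /\
  x2 t = sqrt (x1 t ^ 2 + x2 t ^ 2) * sin (th t).

Lemma continuous_curve t : 0 <= t <= 1 -> continuous x1 t /\ continuous x2 t.
Proof.
  intros Ht. destruct (HC1 t Ht) as (E1 & E2 & _).
  split; apply (ex_derive_continuous (K := R_AbsRing) (V := R_NormedModule)); assumption.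
Qed.

Lemma continuous_areal_speed t : 0 <= t <= 1 -> continuous (areal_speed x1 x2) t.
Proof.
  intros Ht. destruct (HC1 t Ht) as (_ & _ & C1 & C2). destruct (continuous_curve t Ht).
  apply (continuous_minus (V := R_NormedModule)); apply continuous_mult_R; assumption.
Qed.

Lemma continuous_angular_speed t : 0 <= t <= 1 -> continuous (angular_speed x1 x2) t.
Proof.
  intros Ht. destruct (HC1 t Ht) as (E1 & E2 & _). pose proof (Hr t Ht).
  unfold angular_speed, Rdiv.
  apply continuous_mult_R; [apply continuous_areal_speed, Ht|].
  apply continuous_Rinv_comp; [| lra].
  apply (ex_derive_continuous (K := R_AbsRing) (V := R_NormedModule)
           (fun s => x1 s ^ 2 + x2 s ^ 2)).
  auto_derive. auto.
Qed.

Definition lifted_angle (t : R) : R :=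
  th 0 + RInt (fun s => angular_speed x1 x2 (clamp01 s)) 0 t.

Lemma is_derive_lifted_angle t : 0 <= t <= 1 ->
  is_derive lifted_angle t (angular_speed x1 x2 t).
Proof.
  intros Ht. unfold lifted_angle. rewrite <- (clamp01_id t) at 2 by exact Ht.
  replace (angular_speed x1 x2 (clamp01 t)) with (0 + angular_speed x1 x2 (clamp01 t)) by ring.
  apply (is_derive_plus (fun _ => th 0)); [apply is_derive_const_R|].
  set (F := fun s => angular_speed x1 x2 (clamp01 s)).
  apply (is_derive_RInt (V := R_NormedModule) F (fun z => RInt F 0 z) 0 t).
  - apply filter_forall. intros z. apply (RInt_correct (V := R_CompleteNormedModule)).
    apply ex_RInt_continuous_R. intros s. apply continuous_clamped, continuous_angular_speed.
  - apply continuous_clamped, continuous_angular_speed.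
Qed.

Lemma sin_angle_defect t : 0 <= t <= 1 -> sin (th t - lifted_angle t) = 0.
Proof.
  intros Ht.
  set (Z := fun s => (x2 s * cos (lifted_angle s) - x1 s * sin (lifted_angle s)) ^ 2
                     / (x1 s ^ 2 + x2 s ^ 2)).
  assert (DZ : forall s, 0 <= s <= 1 -> is_derive Z s 0).
  { intros s Hs. destruct (HC1 s Hs) as (E1 & E2 & _).
    apply is_derive_angle_mismatch with (Derive x1 s) (Derive x2 s);
      [apply Derive_correct; assumption .. | apply is_derive_lifted_angle, Hs | apply Hr, Hs]. }
  assert (Z0 : Z 0 = 0).
  { unfold Z, lifted_angle. rewrite (RInt_point (V := R_CompleteNormedModule)).
    change (@zero R_CompleteNormedModule) with 0. rewrite Rplus_0_r.
    destruct (Hth 0 ltac:(lra)) as [A B].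
    set (r := sqrt (x1 0 ^ 2 + x2 0 ^ 2)) in *.
    assert (N : x2 0 * cos (th 0) - x1 0 * sin (th 0) = 0) by (rewrite A, B; ring).
    rewrite N. unfold Rdiv. ring. }
  assert (Zt : Z t = 0).
  { destruct (Req_dec t 0) as [-> | Hn]; [exact Z0|].
    destruct (MVT_gen Z 0 t (fun _ => 0)) as [c [Hc E]].
    - intros x Hx. rewrite Rmin_left, Rmax_right in Hx by lra. apply DZ. lra.
    - intros x Hx. rewrite Rmin_left, Rmax_right in Hx by lra. apply continuity_pt_filterlim.
      apply (ex_derive_continuous (K := R_AbsRing) (V := R_NormedModule)).
      exists 0. apply DZ. lra.
    - lra. }
  pose proof (Hr t Ht). destruct (Hth t Ht) as [A B].
  set (r := sqrt (x1 t ^ 2 + x2 t ^ 2)) in *.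
  assert (Hs : 0 < r) by (apply sqrt_lt_R0; lra).
  assert (W : x2 t * cos (lifted_angle t) - x1 t * sin (lifted_angle t) = 0).
  { unfold Z in Zt. apply Rmult_integral in Zt as [W | W].
    - destruct (Req_dec (x2 t * cos (lifted_angle t) - x1 t * sin (lifted_angle t)) 0)
        as [| Hn]; [assumption | exfalso; exact (pow_nonzero _ 2 Hn W)].
    - apply Rinv_neq_0_compat in W; lra. }
  rewrite A, B in W. rewrite sin_minus.
  apply (Rmult_eq_reg_l r); [rewrite Rmult_0_r, <- W; ring | lra].
Qed.

Lemma winding_angle_integral : th 1 - th 0 = RInt (angular_speed x1 x2) 0 1.
Proof.
  set (D := fun t => th (clamp01 t) - lifted_angle t).
  assert (HD : D 1 = 0).
  { apply sin_eq0_continuous_const.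
    - intros t. apply (continuous_minus (V := R_NormedModule));
        [apply continuous_clamped_within, Hthc|].
      apply (continuous_plus (V := R_NormedModule)); [apply continuous_const|].
      apply continuous_primitive. intros s.
      apply continuous_clamped, continuous_angular_speed.
    - intros t Ht. unfold D. rewrite clamp01_id by exact Ht. apply sin_angle_defect, Ht.
    - unfold D, lifted_angle. rewrite clamp01_id by lra.
      rewrite (RInt_point (V := R_CompleteNormedModule)).
      change (@zero R_CompleteNormedModule) with 0. ring. }
  unfold D, lifted_angle in HD. rewrite clamp01_id in HD by lra.
  rewrite (RInt_ext (fun s => angular_speed x1 x2 (clamp01 s)) (angular_speed x1 x2)) in HD.
  - lra.
  - intros x Hx. rewrite Rmin_left, Rmax_right in Hx by lra. rewrite clamp01_id; lra.
Qed.

End Winding.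

(** * The area estimate *)

Lemma areal_defect_le (x1 x2 d1 d2 de : R) : 0 <= de ->
  1 <= x1 ^ 2 + x2 ^ 2 <= (1 + de) ^ 2 ->
  Rabs (/ 2 * ((x1 * d2 - x2 * d1) - (x1 * d2 - x2 * d1) / (x1 ^ 2 + x2 ^ 2)))
    <= de * sqrt (d1 ^ 2 + d2 ^ 2).
Proof.
  intros Hde [HS1 HS2].
  set (S := x1 ^ 2 + x2 ^ 2) in *. set (W := x1 * d2 - x2 * d1).
  set (N := sqrt (d1 ^ 2 + d2 ^ 2)). set (r := sqrt S).
  assert (Hr2 : r * r = S) by (apply sqrt_sqrt; lra).
  assert (HN2 : N * N = d1 ^ 2 + d2 ^ 2) by (apply sqrt_sqrt; nra).
  assert (HN0 : 0 <= N) by apply sqrt_pos.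
  assert (Hr1 : 1 <= r) by (rewrite <- sqrt_1; apply sqrt_le_1_alt; lra).
  assert (Hrd : r <= 1 + de)
    by (rewrite <- (sqrt_pow2 (1 + de)) by lra; apply sqrt_le_1_alt; lra).
  assert (HWa : Rabs W <= r * N).
  { assert (S * (d1 ^ 2 + d2 ^ 2) - W * W = (x1 * d1 + x2 * d2) ^ 2) by (unfold S, W; ring).
    rewrite <- (Rabs_right (r * N)) by nra. apply Rsqr_le_abs_0. unfold Rsqr.
    pose proof (pow2_ge_0 (x1 * d1 + x2 * d2)). nra. }
  replace (/ 2 * (W - W / S)) with (W * ((r * r - 1) / (2 * (r * r))))
    by (rewrite Hr2; field; lra).
  rewrite Rabs_mult, (Rabs_right ((r * r - 1) / (2 * (r * r))))
    by (apply Rle_ge, Rdiv_le_0_compat; nra).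
  apply Rle_trans with ((r * N) * ((r * r - 1) / (2 * (r * r)))).
  - apply Rmult_le_compat_r; [apply Rdiv_le_0_compat; nra | exact HWa].
  - replace (r * N * ((r * r - 1) / (2 * (r * r)))) with (N * ((r * r - 1) / (2 * r)))
      by (field; lra).
    rewrite Rmult_comm. apply Rmult_le_compat_r; [exact HN0|].
    apply (Rmult_le_reg_r (2 * r)); [lra|].
    replace ((r * r - 1) / (2 * r) * (2 * r)) with (r * r - 1) by (field; lra). nra.
Qed.

Lemma pullback_area_green (x1 x2 : R -> R) (u1 u2 : R -> R -> R) :
  C1_curve x1 x2 -> capping_disc x1 x2 u1 u2 ->
  pullback_area u1 u2 = RInt (fun t => x1 t * Derive x2 t) 0 1.
Proof.
  intros HC1 [[e [He [Cu1 Cu2]]] Hbd].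
  assert (C1 : forall u, C1_on2 (in_disc (1 + e)) u ->
                 forall p b, in_disc (1 + e) p b -> C1_pt u p b)
    by (intros u Cu p b H; exact (C1_on2_C1_pt _ u p b Cu (in_disc_open _ _ _ H))).
  apply (green_disc e u1 u2 He (C1 u1 Cu1) (C1 u2 Cu2) x1 x2 Hbd).
  intros t Ht. destruct (HC1 t Ht) as (E1 & _ & _ & C2). split; [|exact C2].
  apply (ex_derive_continuous (K := R_AbsRing) (V := R_NormedModule)), E1.
Qed.

Lemma RInt_closed_curve_area (x1 x2 : R -> R) : C1_curve x1 x2 -> closed_curve x1 x2 ->
  RInt (fun t => x1 t * Derive x2 t) 0 1 = RInt (areal_speed x1 x2) 0 1 / 2.
Proof.
  intros HC1 [Hc1 Hc2].
  assert (C : forall t, 0 <= t <= 1 -> continuous x1 t /\ continuous x2 t /\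
                continuous (Derive x1) t /\ continuous (Derive x2) t).
  { intros t Ht. destruct (HC1 t Ht) as (E1 & E2 & C1 & C2).
    split; [|split]; [| |auto];
      apply (ex_derive_continuous (K := R_AbsRing) (V := R_NormedModule)); assumption. }
  unfold areal_speed. rewrite RInt_minus_R
    by (apply ex_RInt_continuous_01; intros t Ht; apply continuous_mult_R; apply C, Ht).
  rewrite (integration_by_parts x1 x2 (Derive x1) (Derive x2) 0 1).
  - rewrite Hc1, Hc2.
    rewrite (RInt_ext (fun t => Derive x1 t * x2 t) (fun t => x2 t * Derive x1 t))
      by (intros; apply Rmult_comm).
    lra.
  - intros t Ht. rewrite Rmin_left, Rmax_right in Ht by lra.
    destruct (HC1 t Ht) as (E1 & E2 & C1 & C2).
    repeat split; try apply Derive_correct; assumption.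
Qed.

Lemma abs_RInt_le_length (G : R -> R) (x1 x2 : R -> R) delta : C1_curve x1 x2 ->
  (forall t, 0 <= t <= 1 -> continuous G t) ->
  (forall t, 0 <= t <= 1 -> Rabs (G t) <= delta * sqrt (Derive x1 t ^ 2 + Derive x2 t ^ 2)) ->
  Rabs (RInt G 0 1) <= curve_length x1 x2 * delta.
Proof.
  intros HC1 CG HG.
  set (speed := fun t => sqrt (Derive x1 t ^ 2 + Derive x2 t ^ 2)).
  assert (Cs : forall t, 0 <= t <= 1 -> continuous speed t).
  { intros t Ht. destruct (HC1 t Ht) as (_ & _ & C1 & C2).
    apply continuous_sqrt_comp, (continuous_plus (V := R_NormedModule));
      apply continuous_pow2_R; assumption. }
  eapply Rle_trans; [apply abs_RInt_le; [lra | apply ex_RInt_continuous_01, CG]|].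
  unfold curve_length. fold speed.
  rewrite Rmult_comm, <- RInt_scal_R by (apply ex_RInt_continuous_01, Cs).
  apply RInt_le; [lra | | | intros t Ht; apply HG; lra].
  - apply ex_RInt_continuous_01. intros t Ht. apply continuous_Rabs_comp, CG, Ht.
  - apply ex_RInt_continuous_01. intros t Ht. apply continuous_mult_R; [apply continuous_const | apply Cs, Ht].
Qed.

Theorem lemma4p1 (delta : R) (x1 x2 : R -> R) (u1 u2 : R -> R -> R) (n : Z) :
  0 < delta ->
  C1_curve x1 x2 ->
  closed_curve x1 x2 ->
  (forall t, 0 <= t <= 1 ->
     1 <= x1 t ^ 2 + x2 t ^ 2 <= (1 + delta) ^ 2) ->
  capping_disc x1 x2 u1 u2 ->
  winding_number x1 x2 n ->
  Rabs (pullback_area u1 u2 - PI * IZR n) <= curve_length x1 x2 * delta.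
Proof.
  intros Hd HC1 Hcl Hring Hcap [th [Hthc [Hth Hn]]].
  assert (Hr : forall t, 0 <= t <= 1 -> 0 < x1 t ^ 2 + x2 t ^ 2)
    by (intros t Ht; specialize (Hring t Ht); lra).
  pose proof (winding_angle_integral x1 x2 th HC1 Hr Hthc Hth) as W.
  assert (CA := continuous_areal_speed x1 x2 HC1).
  assert (CW := continuous_angular_speed x1 x2 HC1 Hr).
  assert (Defect : pullback_area u1 u2 - PI * IZR n
    = RInt (fun t => / 2 * (areal_speed x1 x2 t - angular_speed x1 x2 t)) 0 1).
  { rewrite RInt_scal_R, RInt_minus_R by (apply ex_RInt_continuous_01; auto;
      intros t Ht; apply (continuous_minus (V := R_NormedModule)); auto).
    rewrite (pullback_area_green x1 x2), RInt_closed_curve_area by assumption. lra. }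
  rewrite Defect. apply abs_RInt_le_length; [exact HC1 | |].
  - intros t Ht. apply continuous_mult_R; [apply continuous_const|].
    apply (continuous_minus (V := R_NormedModule)); auto.
  - intros t Ht. apply areal_defect_le; [lra | apply Hring, Ht].
Qed.
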